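(* Let $\alpha\le\omega$ and let $\mathcal A=((A_i,<_{A_i})\mid i<\alpha)$ and $\mathcal B=((B_i,<_{B_i})\mid i<\alpha)$ be sequences of countable linear orders shuffled by families $\mathcal S_A=(S^A_{i,j}\mid i<j<\alpha)$ and $\mathcal S_B=(S^B_{i,j}\mid i<j<\alpha)$ respectively. The following are equivalent: (1) the limit structures $(\bigsqcup_{\mathcal S_A}\mathcal A,\subset,\pi^A_i(A_i))_{i<\alpha}$ and $(\bigsqcup_{\mathcal S_B}\mathcal B,\subset,\pi^B_i(B_i))_{i<\alpha}$ are isomorphic; (2) there are order isomorphisms $f_i:A_i\to B_i$ ($i<\alpha$) such that for all $i<j<\alpha$, $x\in A_i$, $y\in A_j$: $(x,y)\in S^A_{i,j}$ iff $(f_i(x),f_j(y))\in S^B_{i,j}$; (3) $(A_i,<_{A_i})\cong(B_i,<_{B_i})$ for all $i<\alpha$.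
   Context: For a relation $S\subseteq X\times Y$, $S(X,y)=\{x:(x,y)\in S\}$ and $S(x,Y)=\{y:(x,y)\in S\}$. A shuffling relation between linear orders $(X,<_X),(Y,<_Y)$ is a non-empty $S\subseteq X\times Y$ such that (1) $(S(X,y)\mid y\in Y)$ is a strictly increasing sequence of initial segments of $X$, none of which has a supremum in $X$, and (2) $(S(x,Y)\mid x\in X)$ is a strictly decreasing sequence of final segments of $Y$. A family $(S_{i,j}\subseteq A_i\times A_j\mid i<j<\alpha)$ shuffles $((A_i,<_i)\mid i<\alpha)$ if each $S_{i,j}$ is a shuffling relation between $A_i$ and $A_j$ and $S_{j,k}\circ S_{i,j}=S_{i,k}$ for all $i<j<k<\alpha$ (composition: $(a,c)\in S_{j,k}\circ S_{i,j}$ iff there is $b$ with $(a,b)\in S_{i,j}$, $(b,c)\in S_{j,k}$). For a dense linear order $A_0$, $\mathfrak D(A_0)$ is the set of all topologically open initial segments of $A_0$ (including $\emptyset$, excluding $A_0$ if it has a maximum), ordered by $\subset$. The canonical maps are $\pi_0(x)=\{y\in A_0:y<x\}$ and $\pi_i(x)=S_{0,i}(A_0,x)$ for $i>0$; the limit structure is $\bigsqcup_{\mathcal S}\mathcal A=\bigcup_{i<\alpha}\pi_i(A_i)\subseteq\mathfrak D(A_0)$, ordered by $\subset$ and with a unary predicate for each $\pi_i(A_i)$. *)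

From Stdlib Require Import Arith.

(* An ordinal alpha <= omega: [Some n] is the finite ordinal n, [None] is omega. *)
Definition below (alpha : option nat) (i : nat) : Prop :=
  match alpha with None => True | Some n => i < n end.

Definition strict_linear_order {X : Type} (lt : X -> X -> Prop) : Prop :=
  (forall x, ~ lt x x) /\
  (forall x y z, lt x y -> lt y z -> lt x z) /\
  (forall x y, x = y \/ lt x y \/ lt y x).

Definition countable (X : Type) : Prop :=
  exists g : X -> nat, forall x y, g x = g y -> x = y.

Definition le_of {X : Type} (lt : X -> X -> Prop) (x y : X) : Prop := lt x y \/ x = y.

Definition initial_segment {X : Type} (lt : X -> X -> Prop) (P : X -> Prop) : Prop :=
  forall x y, lt x y -> P y -> P x.

Definition final_segment {X : Type} (lt : X -> X -> Prop) (P : X -> Prop) : Prop :=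
  forall x y, lt x y -> P x -> P y.

Definition subset {X : Type} (P Q : X -> Prop) : Prop := forall x, P x -> Q x.

Definition strict_subset {X : Type} (P Q : X -> Prop) : Prop :=
  subset P Q /\ exists x, Q x /\ ~ P x.

Definition is_supremum {X : Type} (lt : X -> X -> Prop) (P : X -> Prop) (s : X) : Prop :=
  (forall x, P x -> le_of lt x s) /\
  (forall u, (forall x, P x -> le_of lt x u) -> le_of lt s u).

Definition shuffling_relation {X Y : Type} (ltX : X -> X -> Prop) (ltY : Y -> Y -> Prop)
    (S : X -> Y -> Prop) : Prop :=
  (exists x y, S x y) /\
  (forall y, initial_segment ltX (fun x => S x y)) /\
  (forall y y', ltY y y' -> strict_subset (fun x => S x y) (fun x => S x y')) /\
  (forall y, ~ exists s, is_supremum ltX (fun x => S x y) s) /\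
  (forall x, final_segment ltY (fun y => S x y)) /\
  (forall x x', ltX x x' -> strict_subset (fun y => S x' y) (fun y => S x y)).

Definition shuffles (alpha : option nat) (A : nat -> Type)
    (ltA : forall i, A i -> A i -> Prop) (SA : forall i j, A i -> A j -> Prop) : Prop :=
  (forall i j, i < j -> below alpha j -> shuffling_relation (ltA i) (ltA j) (SA i j)) /\
  (forall i j k, i < j -> j < k -> below alpha k ->
     forall (a : A i) (c : A k), SA i k a c <-> exists b : A j, SA i j a b /\ SA j k b c).

Definition canon_map (A : nat -> Type) (ltA : forall i, A i -> A i -> Prop)
    (SA : forall i j, A i -> A j -> Prop) (i : nat) : A i -> (A 0 -> Prop) :=
  match i as n return A n -> (A 0 -> Prop) with
  | 0 => fun x a => ltA 0 a x
  | S m => fun x a => SA 0 (S m) a x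
  end.

Definition in_level (A : nat -> Type) (ltA : forall i, A i -> A i -> Prop)
    (SA : forall i j, A i -> A j -> Prop) (i : nat) (D : A 0 -> Prop) : Prop :=
  exists x : A i, D = canon_map A ltA SA i x.

Definition limit_carrier (alpha : option nat) (A : nat -> Type)
    (ltA : forall i, A i -> A i -> Prop) (SA : forall i j, A i -> A j -> Prop)
    (D : A 0 -> Prop) : Prop :=
  exists i, below alpha i /\ in_level A ltA SA i D.

Definition limit_structure (alpha : option nat) (A : nat -> Type)
    (ltA : forall i, A i -> A i -> Prop) (SA : forall i j, A i -> A j -> Prop) : Type :=
  { D : A 0 -> Prop | limit_carrier alpha A ltA SA D }.

Definition limits_isomorphic (alpha : option nat)
    (A : nat -> Type) (ltA : forall i, A i -> A i -> Prop) (SA : forall i j, A i -> A j -> Prop)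
    (B : nat -> Type) (ltB : forall i, B i -> B i -> Prop) (SB : forall i j, B i -> B j -> Prop)
    : Prop :=
  exists (F : limit_structure alpha A ltA SA -> limit_structure alpha B ltB SB)
         (G : limit_structure alpha B ltB SB -> limit_structure alpha A ltA SA),
    (forall D, G (F D) = D) /\ (forall E, F (G E) = E) /\
    (forall D D', subset (proj1_sig D) (proj1_sig D') <->
                  subset (proj1_sig (F D)) (proj1_sig (F D'))) /\
    (forall i, below alpha i -> forall D,
        in_level A ltA SA i (proj1_sig D) <-> in_level B ltB SB i (proj1_sig (F D))).

Definition order_iso {X Y : Type} (ltX : X -> X -> Prop) (ltY : Y -> Y -> Prop)
    (f : X -> Y) : Prop :=
  (exists g : Y -> X, (forall x, g (f x) = x) /\ (forall y, f (g y) = y)) /\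
  (forall x x', ltX x x' <-> ltY (f x) (f x')).

From Stdlib Require Import Arith Lia List Cantor Eqdep_dec.
From Stdlib Require Import Classical ClassicalEpsilon ProofIrrelevance.

(* Both limit structures are determined by their "points" [(i, x)] with [x] in [A_i],
   ordered by inclusion of the images [pi_i(x)] in [D(A_0)].  On one level this order is
   [<_{A_i}], and between levels [i < j] it is [S_{i,j}]; this gives (1) <-> (2).  When
   [alpha >= 2] the shuffling axioms make every level dense in the points, so the points
   form a countable linear order coloured by levels in which every colour is dense, with
   endpoints of the same colours on both sides by (3); a back-and-forth argument then
   yields a colour-preserving isomorphism, i.e. (2).  When [alpha <= 1], (2) is (3). *)

Lemma strict_subset_irrefl {X} (P : X -> Prop) : ~ strict_subset P P.
Proof. intros [_ [a [h1 h2]]]; tauto. Qed.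

Lemma strict_subset_not_subset {X} (P Q : X -> Prop) :
  strict_subset P Q -> ~ subset Q P.
Proof. intros [_ [a [h1 h2]]] h; apply h2, h, h1. Qed.

Lemma strict_subset_asym {X} (P Q : X -> Prop) :
  strict_subset P Q -> ~ strict_subset Q P.
Proof. intros h [h' _]; exact (strict_subset_not_subset _ _ h h'). Qed.

Lemma strict_subset_trans {X} (P Q R : X -> Prop) :
  strict_subset P Q -> strict_subset Q R -> strict_subset P R.
Proof.
  intros [h1 [a [ha1 ha2]]] [h2 _]. split.
  - intros x hx; apply h2, h1, hx.
  - exists a; split; auto.
Qed.

Lemma not_subset_witness {X} (P Q : X -> Prop) : ~ subset P Q -> exists a, P a /\ ~ Q a.
Proof.
  intros h; apply not_all_ex_not in h; destruct h as [a ha].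
  apply imply_to_and in ha; eauto.
Qed.

Section ShufflingRelation.
Context {X Y : Type}.
Variables (ltX : X -> X -> Prop) (ltY : Y -> Y -> Prop) (S : X -> Y -> Prop).
Hypotheses (linX : strict_linear_order ltX) (linY : strict_linear_order ltY)
  (hS : shuffling_relation ltX ltY S).

(* A greatest element of [S(X,y)] would be its supremum. *)
Lemma shuffling_column_no_greatest x y : S x y -> exists x', ltX x x' /\ S x' y.
Proof.
  intros hxy. destruct hS as [_ [_ [_ [hnosup _]]]].
  destruct linX as [_ [_ htri]].
  apply NNPP; intros hn. apply (hnosup y). exists x. split.
  - intros w hw. destruct (htri w x) as [e|[e|e]].
    + right; exact e.
    + left; exact e.
    + exfalso; apply hn; eauto.
  - intros u hu. apply hu, hxy.
Qed.

(* Otherwise [x] would be the supremum of [S(X,y)]. *)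
Lemma shuffling_column_compl_no_least x y : ~ S x y -> exists x', ltX x' x /\ ~ S x' y.
Proof.
  intros hxy. destruct hS as [_ [hinit [_ [hnosup _]]]].
  destruct linX as [_ [_ htri]].
  apply NNPP; intros hn.
  assert (below_x : forall w, ltX w x -> S w y)
    by (intros w hw; apply NNPP; intros hw'; apply hn; eauto).
  apply (hnosup y). exists x. split.
  - intros w hw. destruct (htri w x) as [e|[e|e]].
    + right; exact e.
    + left; exact e.
    + exfalso; apply hxy, (hinit y x w e hw).
  - intros u hu. destruct (htri x u) as [e|[e|e]].
    + right; exact e.
    + left; exact e.
    + exfalso. destruct (shuffling_column_no_greatest u y (below_x u e)) as [w [huw hw]].
      destruct (hu w hw) as [hwu|hwu].
      * apply (proj1 linX u). exact (proj1 (proj2 linX) _ _ _ huw hwu).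
      * subst w. exact (proj1 linX u huw).
Qed.

Lemma shuffling_row_compl_no_greatest x y : ~ S x y -> exists y', ltY y y' /\ ~ S x y'.
Proof.
  intros hxy. destruct (shuffling_column_compl_no_least x y hxy) as [x' [hx hx']].
  destruct hS as [_ [_ [_ [_ [hfin hdec]]]]].
  destruct (hdec x' x hx) as [_ [y' [h1 h2]]].
  destruct linY as [_ [_ htri]].
  exists y'. destruct (htri y' y) as [e|[e|e]].
  - subst; contradiction.
  - exfalso; apply hx', (hfin x' y' y e h1).
  - split; auto.
Qed.

End ShufflingRelation.

(** * The canonical maps *)

Lemma below_le alpha i j : j <= i -> below alpha i -> below alpha j.
Proof. destruct alpha; simpl; auto; lia. Qed.

Section CanonicalMaps.
Variables (alpha : option nat) (A : nat -> Type) (ltA : forall i, A i -> A i -> Prop)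
  (SA : forall i j, A i -> A j -> Prop).
Hypotheses (Hlin : forall i, below alpha i -> strict_linear_order (ltA i))
  (Hsh : shuffles alpha A ltA SA).

Local Notation pi := (canon_map A ltA SA).

Let shuffling i j : i < j -> below alpha j -> shuffling_relation (ltA i) (ltA j) (SA i j).
Proof. intros; apply Hsh; auto. Qed.

Let lt_irrefl i (x : A i) : below alpha i -> ~ ltA i x x.
Proof. intros h; apply (Hlin i h). Qed.

Let lt_trichotomy i (x y : A i) : below alpha i -> x = y \/ ltA i x y \/ ltA i y x.
Proof. intros h; apply (Hlin i h). Qed.

Lemma canon_map_strict_mono i (x x' : A i) : below alpha i ->
  ltA i x x' -> strict_subset (pi i x) (pi i x').
Proof.
  intros hi h. destruct i as [|m].
  - split.
    + intros a ha. exact (proj1 (proj2 (Hlin 0 hi)) _ _ _ ha h).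
    + exists x. split; [exact h|apply lt_irrefl, hi].
  - destruct (shuffling 0 (S m)) as [_ [_ [hinc _]]]; [lia|exact hi|exact (hinc x x' h)].
Qed.

Lemma canon_map_lt_level i (x x' : A i) : below alpha i ->
  ltA i x x' <-> strict_subset (pi i x) (pi i x').
Proof.
  intros hi. split; [apply canon_map_strict_mono, hi|intros h].
  destruct (lt_trichotomy i x x' hi) as [e|[e|e]]; auto.
  - subst. exfalso; exact (strict_subset_irrefl _ h).
  - exfalso. exact (strict_subset_asym _ _ h (canon_map_strict_mono _ _ _ hi e)).
Qed.

(* For [i = 0] this is the absence of a greatest element in [S(A_0, y)]; for
   [i > 0] it is the composition law [S_{0,j} = S_{i,j} o S_{0,i}]. *)
Lemma canon_map_through i j (y : A j) a : i < j -> below alpha j ->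
  pi j y a <-> exists b : A i, pi i b a /\ SA i j b y.
Proof.
  intros hij hj. destruct j as [|j']; [lia|].
  assert (hi : below alpha i) by (apply (below_le alpha (S j')); auto; lia).
  destruct i as [|i'].
  - destruct (shuffling 0 (S j') hij hj) as [_ [hinit _]]. split.
    + intros ha.
      destruct (shuffling_column_no_greatest _ _ _ (Hlin 0 hi) (shuffling 0 (S j') hij hj)
                  a y ha) as [b hb].
      exists b; exact hb.
    + intros [b [hab hb]]. exact (hinit y a b hab hb).
  - apply Hsh; auto; lia.
Qed.

Lemma shuffle_of_not_subset i j (x : A i) (y : A j) : i < j -> below alpha j ->
  ~ subset (pi j y) (pi i x) -> SA i j x y.
Proof.
  intros hij hj hsub.
  assert (hi : below alpha i) by (apply (below_le alpha j); auto; lia).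
  destruct (not_subset_witness _ _ hsub) as [a [hay hax]].
  destruct (proj1 (canon_map_through i j y a hij hj) hay) as [b [hab hb]].
  destruct (shuffling i j hij hj) as [_ [hinit _]].
  destruct (lt_trichotomy i b x hi) as [e|[e|e]].
  - subst; contradiction.
  - exfalso. apply hax, (proj1 (canon_map_strict_mono i b x hi e)), hab.
  - exact (hinit y x b e hb).
Qed.

Lemma canon_map_lt_shuffle i j (x : A i) (y : A j) : i < j -> below alpha j ->
  SA i j x y <-> strict_subset (pi i x) (pi j y).
Proof.
  intros hij hj.
  assert (hi : below alpha i) by (apply (below_le alpha j); auto; lia).
  split.
  - intros hxy. split.
    + intros a ha. apply (canon_map_through i j y a hij hj). eauto.
    + destruct (shuffling_column_no_greatest _ _ _ (Hlin i hi) (shuffling i j hij hj) x y hxy)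
        as [x' [hxx' hx'y]].
      destruct (canon_map_strict_mono i x x' hi hxx') as [_ [a [ha1 ha2]]].
      exists a. split; [|exact ha2].
      apply (canon_map_through i j y a hij hj). eauto.
  - intros h. apply shuffle_of_not_subset; auto. apply strict_subset_not_subset, h.
Qed.

Lemma canon_map_gt_not_shuffle i j (x : A i) (y : A j) : i < j -> below alpha j ->
  ~ SA i j x y <-> strict_subset (pi j y) (pi i x).
Proof.
  intros hij hj.
  assert (hi : below alpha i) by (apply (below_le alpha j); auto; lia).
  split.
  - intros hxy.
    destruct (shuffling_column_compl_no_least _ _ _ (Hlin i hi) (shuffling i j hij hj) x y hxy)
      as [x' [hx'x hx'y]].
    destruct (canon_map_strict_mono i x' x hi hx'x) as [hsub [a [ha1 ha2]]].
    assert (hyx' : subset (pi j y) (pi i x'))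
      by (apply NNPP; intros h; exact (hx'y (shuffle_of_not_subset i j x' y hij hj h))).
    split; [intros b hb; apply hsub, hyx', hb|].
    exists a. split; [exact ha1|intros hay; exact (ha2 (hyx' a hay))].
  - intros h hs. apply (canon_map_lt_shuffle i j x y hij hj) in hs.
    exact (strict_subset_asym _ _ h hs).
Qed.

Lemma canon_map_trichotomy i (x : A i) j (y : A j) : below alpha i -> below alpha j ->
  strict_subset (pi i x) (pi j y) \/ existT A i x = existT A j y \/
  strict_subset (pi j y) (pi i x).
Proof.
  intros hi hj. destruct (lt_eq_lt_dec i j) as [[e|e]|e].
  - destruct (classic (SA i j x y)) as [h|h].
    + left. apply canon_map_lt_shuffle; auto.
    + right; right. apply canon_map_gt_not_shuffle; auto.
  - subst j. destruct (lt_trichotomy i x y hi) as [e|[e|e]].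
    + subst; auto.
    + left. apply canon_map_strict_mono; auto.
    + right; right. apply canon_map_strict_mono; auto.
  - destruct (classic (SA j i y x)) as [h|h].
    + right; right. apply canon_map_lt_shuffle; auto.
    + left. apply canon_map_gt_not_shuffle; auto.
Qed.

Lemma canon_map_not_gt_subset i (x : A i) j (y : A j) : below alpha i -> below alpha j ->
  ~ strict_subset (pi j y) (pi i x) <-> subset (pi i x) (pi j y).
Proof.
  intros hi hj. split.
  - intros h. destruct (canon_map_trichotomy i x j y hi hj) as [[hs _]|[e|e]].
    + exact hs.
    + inversion_sigma e. subst. intros a ha; exact ha.
    + contradiction.
  - intros h h'. exact (strict_subset_not_subset _ _ h' h).
Qed.

Lemma canon_map_injective i (x : A i) j (y : A j) : below alpha i -> below alpha j ->
  pi i x = pi j y -> existT A i x = existT A j y.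
Proof.
  intros hi hj e. destruct (canon_map_trichotomy i x j y hi hj) as [h|[h|h]]; auto;
    rewrite e in h; exfalso; exact (strict_subset_irrefl _ h).
Qed.

Lemma canon_map_refine_level i j (x : A i) (y : A j) : i <> j -> below alpha i ->
  below alpha j -> strict_subset (pi i x) (pi j y) ->
  exists x' : A i, strict_subset (pi i x) (pi i x') /\ strict_subset (pi i x') (pi j y).
Proof.
  intros hne hi hj h. destruct (lt_eq_lt_dec i j) as [[e|e]|e]; [|contradiction|].
  - apply (canon_map_lt_shuffle i j x y e hj) in h.
    destruct (shuffling_column_no_greatest _ _ _ (Hlin i hi) (shuffling i j e hj) x y h)
      as [x' [h1 h2]].
    exists x'. split; [apply canon_map_strict_mono; auto|apply canon_map_lt_shuffle; auto].
  - apply (canon_map_gt_not_shuffle j i y x e hi) in h.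
    destruct (shuffling_row_compl_no_greatest _ _ _ (Hlin j hj) (Hlin i hi) (shuffling j i e hi)
                y x h) as [x' [h1 h2]].
    exists x'. split; [apply canon_map_strict_mono; auto|apply canon_map_gt_not_shuffle; auto].
Qed.

Lemma canon_map_between_other_level i k (x x' : A i) : k <> i -> below alpha i ->
  below alpha k -> ltA i x x' ->
  exists z : A k, strict_subset (pi i x) (pi k z) /\ strict_subset (pi k z) (pi i x').
Proof.
  intros hne hi hk h. destruct (lt_eq_lt_dec i k) as [[e|e]|e]; [|subst; contradiction|].
  - destruct (shuffling i k e hk) as [_ [_ [_ [_ [_ hdec]]]]].
    destruct (hdec x x' h) as [_ [z [h1 h2]]].
    exists z. split; [apply canon_map_lt_shuffle|apply canon_map_gt_not_shuffle]; auto.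
  - destruct (shuffling k i e hi) as [_ [_ [hinc _]]].
    destruct (hinc x x' h) as [_ [z [h1 h2]]].
    exists z. split; [apply canon_map_gt_not_shuffle|apply canon_map_lt_shuffle]; auto.
Qed.

Section TwoLevels.
Hypothesis two_levels : below alpha 1.

Lemma canon_map_between_level i k (x x' : A i) : below alpha i -> below alpha k ->
  ltA i x x' ->
  exists z : A k, strict_subset (pi i x) (pi k z) /\ strict_subset (pi k z) (pi i x').
Proof.
  intros hi hk h. destruct (Nat.eq_dec k i) as [e|e]; [|apply canon_map_between_other_level; auto].
  subst k. set (k' := if Nat.eq_dec i 0 then 1 else 0).
  assert (hk' : k' <> i) by (unfold k'; destruct (Nat.eq_dec i 0); lia).
  assert (hbk' : below alpha k')
    by (apply (below_le alpha 1); auto; unfold k'; destruct (Nat.eq_dec i 0); lia).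
  destruct (canon_map_between_other_level i k' x x' hk' hi hbk' h) as [w [hw1 hw2]].
  destruct (canon_map_refine_level i k' x w (not_eq_sym hk') hi hbk' hw1) as [x'' [hx1 hx2]].
  exists x''. split; [exact hx1|]. eapply strict_subset_trans; eauto.
Qed.

Lemma canon_map_dense i j k (x : A i) (y : A j) :
  below alpha i -> below alpha j -> below alpha k -> strict_subset (pi i x) (pi j y) ->
  exists z : A k, strict_subset (pi i x) (pi k z) /\ strict_subset (pi k z) (pi j y).
Proof.
  intros hi hj hk h. destruct (Nat.eq_dec i j) as [e|e].
  - subst j. apply canon_map_lt_level in h; auto. apply canon_map_between_level; auto.
  - destruct (canon_map_refine_level i j x y e hi hj h) as [x' [hx1 hx2]].
    apply canon_map_lt_level in hx1; auto.
    destruct (canon_map_between_level i k x x' hi hk hx1) as [z [hz1 hz2]].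
    exists z; split; auto. eapply strict_subset_trans; eauto.
Qed.

End TwoLevels.
End CanonicalMaps.

(** * Back and forth for coloured dense orders *)

Definition is_min {X} (lt : X -> X -> Prop) (x : X) : Prop := forall u, ~ lt u x.
Definition is_max {X} (lt : X -> X -> Prop) (x : X) : Prop := forall u, ~ lt x u.

Lemma not_min_lt {X} (lt : X -> X -> Prop) x : ~ is_min lt x -> exists u, lt u x.
Proof. intros h; apply NNPP; intros hn; apply h; intros u hu; eauto. Qed.

Lemma not_max_lt {X} (lt : X -> X -> Prop) x : ~ is_max lt x -> exists u, lt x u.
Proof. intros h; apply NNPP; intros hn; apply h; intros u hu; eauto. Qed.

Lemma strict_linear_order_flip {X} (lt : X -> X -> Prop) :
  strict_linear_order lt -> strict_linear_order (fun x y => lt y x).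
Proof.
  intros [h1 [h2 h3]]. split; [|split]; auto.
  - intros x y z a b; eauto.
  - intros x y; destruct (h3 x y) as [e|[e|e]]; auto.
Qed.

Lemma list_greatest {L M} (lt : L -> L -> Prop) (Q : L -> Prop) (P : list (L * M)) :
  strict_linear_order lt ->
  (forall p, In p P -> ~ Q (fst p)) \/
  exists p, In p P /\ Q (fst p) /\ forall p', In p' P -> Q (fst p') -> le_of lt (fst p') (fst p).
Proof.
  intros [_ [htr htri]]. induction P as [|x P IH].
  - left; intros p [].
  - destruct IH as [IH|[m [hm1 [hm2 hm3]]]].
    + destruct (classic (Q (fst x))) as [hq|hq].
      * right. exists x. split; [left; auto|split; auto].
        intros p' [e|e] hp'; [subst; right; auto|]. exfalso; exact (IH p' e hp').
      * left. intros p [e|e]; [subst; auto|auto].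
    + destruct (classic (Q (fst x) /\ lt (fst m) (fst x))) as [[hq hl]|hq].
      * right. exists x. split; [left; auto|split; auto].
        intros p' [e|e] hp'; [subst; right; auto|].
        destruct (hm3 p' e hp') as [h|h]; left; [eauto|rewrite h; auto].
      * right. exists m. split; [right; auto|split; auto].
        intros p' [e|e] hp'; [|auto]. subst p'.
        destruct (htri (fst x) (fst m)) as [h|[h|h]]; [right; auto|left; auto|].
        exfalso; auto.
Qed.

Definition partial_iso {L M} (ltL : L -> L -> Prop) (ltM : M -> M -> Prop)
    (cL : L -> nat) (cM : M -> nat) (P : list (L * M)) : Prop :=
  (forall a b a' b', In (a, b) P -> In (a', b') P -> (ltL a a' <-> ltM b b')) /\
  (forall a b, In (a, b) P ->
     cL a = cM b /\ (is_min ltL a <-> is_min ltM b) /\ (is_max ltL a <-> is_max ltM b)).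

Definition swap {L M} (p : L * M) : M * L := (snd p, fst p).

Lemma in_map_swap {L M} (P : list (L * M)) a b : In (b, a) (map swap P) <-> In (a, b) P.
Proof.
  rewrite in_map_iff. split.
  - intros [[x y] [e h]]. injection e as -> ->; auto.
  - intros h. exists (a, b); auto.
Qed.

Lemma partial_iso_swap {L M} ltL ltM (cL : L -> nat) (cM : M -> nat) P :
  partial_iso ltL ltM cL cM P <-> partial_iso ltM ltL cM cL (map swap P).
Proof.
  split; intros [g1 g2]; split.
  - intros b a b' a' h h'. rewrite in_map_swap in h, h'. symmetry; eauto.
  - intros b a h. rewrite in_map_swap in h. destruct (g2 a b h) as [c [d e]].
    split; [symmetry; exact c|split; symmetry; assumption].
  - intros a b a' b' h h'. rewrite <- in_map_swap in h, h'. symmetry; eauto.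
  - intros a b h. rewrite <- in_map_swap in h. destruct (g2 b a h) as [c [d e]].
    split; [symmetry; exact c|split; symmetry; assumption].
Qed.

Section BackAndForthStep.
Context {L M : Type}.
Variables (ltL : L -> L -> Prop) (ltM : M -> M -> Prop) (cL : L -> nat) (cM : M -> nat).
Hypotheses (linL : strict_linear_order ltL) (linM : strict_linear_order ltM).

Local Notation partial := (partial_iso ltL ltM cL cM).

Let irrL x : ~ ltL x x. Proof. apply linL. Qed.
Let irrM x : ~ ltM x x. Proof. apply linM. Qed.
Let trM x y z : ltM x y -> ltM y z -> ltM x z. Proof. apply linM. Qed.
Let triL x y : x = y \/ ltL x y \/ ltL y x. Proof. apply linL. Qed.
Let triM x y : x = y \/ ltM x y \/ ltM y x. Proof. apply linM. Qed.

Lemma partial_iso_eq P a b a' b' : partial P -> In (a, b) P -> In (a', b') P ->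
  (a = a' <-> b = b').
Proof.
  intros [h1 _] ha hb. split; intros e.
  - subst a'. destruct (triM b b') as [e|[e|e]]; auto.
    + apply (h1 _ _ _ _ ha hb) in e. exfalso; exact (irrL _ e).
    + apply (h1 _ _ _ _ hb ha) in e. exfalso; exact (irrL _ e).
  - subst b'. destruct (triL a a') as [e|[e|e]]; auto.
    + apply (h1 _ _ _ _ ha hb) in e. exfalso; exact (irrM _ e).
    + apply (h1 _ _ _ _ hb ha) in e. exfalso; exact (irrM _ e).
Qed.

Lemma partial_iso_le P a b a' b' : partial P -> In (a, b) P -> In (a', b') P ->
  le_of ltL a a' -> le_of ltM b b'.
Proof.
  intros hP ha ha' [h|h].
  - left. apply (proj1 hP a b a' b'); auto.
  - right. apply (partial_iso_eq P a b a' b'); auto.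
Qed.

Lemma partial_iso_cons_old P a b : partial P -> In (a, b) P -> partial ((a, b) :: P).
Proof.
  intros [h1 h2] hin. split.
  - intros x y x' y' [e|e] [e'|e']; try injection e as -> ->; try injection e' as -> ->; eauto.
  - intros x y [e|e]; [injection e as -> ->|]; eauto.
Qed.

Lemma partial_iso_cons_new P a b : partial P -> cL a = cM b ->
  (is_min ltL a <-> is_min ltM b) -> (is_max ltL a <-> is_max ltM b) ->
  (forall a' b', In (a', b') P -> a' <> a /\ (ltL a a' -> ltM b b') /\ (ltL a' a -> ltM b' b)) ->
  partial ((a, b) :: P).
Proof.
  intros [g1 g2] hc hmin hmax hcon.
  assert (hiff : forall a' b', In (a', b') P ->
            (ltL a a' <-> ltM b b') /\ (ltL a' a <-> ltM b' b)).
  { intros a' b' hin. destruct (hcon a' b' hin) as [hne [c1 c2]].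
    split; split; auto.
    - intros hb. destruct (triL a a') as [e|[e|e]]; auto.
      + subst; exfalso; apply hne; reflexivity.
      + exfalso. apply (irrM b). eapply trM; [exact hb|apply c2; exact e].
    - intros hb. destruct (triL a a') as [e|[e|e]]; auto.
      + subst; exfalso; apply hne; reflexivity.
      + exfalso. apply (irrM b). eapply trM; [apply c1; exact e|exact hb]. }
  split.
  - intros x y x' y' [e|e] [e'|e']; try injection e as -> ->; try injection e' as -> ->.
    + split; intros h; [exfalso; exact (irrL _ h)|exfalso; exact (irrM _ h)].
    + apply hiff; auto.
    + apply hiff; auto.
    + eauto.
  - intros x y [e|e]; [injection e as -> ->; auto|eauto].
Qed.

Hypotheses
  (coloursM_dense : forall u v z, ltM u v -> exists w, cM w = cM z /\ ltM u w /\ ltM w v)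
  (coloursLM : forall x, exists y, cM y = cL x)
  (minLM : forall x, is_min ltL x -> exists y, is_min ltM y /\ cM y = cL x)
  (maxLM : forall x, is_max ltL x -> exists y, is_max ltM y /\ cM y = cL x)
  (nontrivialL : forall x, exists u, ltL u x \/ ltL x u)
  (nontrivialM : forall y, exists u, ltM u y \/ ltM y u).

Lemma coloured_between u v a : ltM u v -> exists b, cM b = cL a /\ ltM u b /\ ltM b v /\
  ~ is_min ltM b /\ ~ is_max ltM b.
Proof.
  intros h. destruct (coloursLM a) as [z hz].
  destruct (coloursM_dense u v z h) as [w [h1 [h2 h3]]].
  exists w. repeat split; auto; [rewrite h1; auto| |].
  - intros hm; exact (hm u h2).
  - intros hm; exact (hm v h3).
Qed.

Section NewPoint.
Variables (P : list (L * M)) (a : L).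
Hypotheses (hP : partial P) (fresh : forall a' b', In (a', b') P -> a' <> a).

Lemma partial_iso_extend_min : is_min ltL a -> exists b, partial ((a, b) :: P).
Proof.
  intros hmin. destruct (minLM a hmin) as [y [hy1 hy2]].
  assert (hnx : ~ is_max ltL a).
  { intros hm. destruct (nontrivialL a) as [u [hu|hu]]; [exact (hmin u hu)|exact (hm u hu)]. }
  assert (hny : ~ is_max ltM y).
  { intros hm. destruct (nontrivialM y) as [u [hu|hu]]; [exact (hy1 u hu)|exact (hm u hu)]. }
  exists y. apply partial_iso_cons_new; auto; [split; auto|split; intros; contradiction|].
  intros a' b' hin. split; [eauto|]. split.
  - intros _. destruct (triM y b') as [e|[e|e]]; auto.
    + subst b'. exfalso. assert (hmin' : is_min ltL a') by (apply (proj2 hP a' y hin); auto).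
      destruct (triL a a') as [e|[e|e]];
        [subst; eapply fresh; eauto|exact (hmin' a e)|exact (hmin a' e)].
    + exfalso; exact (hy1 b' e).
  - intros e; exfalso; exact (hmin a' e).
Qed.

Lemma partial_iso_extend_max : is_max ltL a -> exists b, partial ((a, b) :: P).
Proof.
  intros hmax. destruct (maxLM a hmax) as [y [hy1 hy2]].
  assert (hnx : ~ is_min ltL a).
  { intros hm. destruct (nontrivialL a) as [u [hu|hu]]; [exact (hm u hu)|exact (hmax u hu)]. }
  assert (hny : ~ is_min ltM y).
  { intros hm. destruct (nontrivialM y) as [u [hu|hu]]; [exact (hm u hu)|exact (hy1 u hu)]. }
  exists y. apply partial_iso_cons_new; auto; [split; intros; contradiction|split; auto|].
  intros a' b' hin. split; [eauto|]. split.
  - intros e; exfalso; exact (hmax a' e).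
  - intros _. destruct (triM y b') as [e|[e|e]]; auto.
    + subst b'. exfalso. assert (hmax' : is_max ltL a') by (apply (proj2 hP a' y hin); auto).
      destruct (triL a a') as [e|[e|e]];
        [subst; eapply fresh; eauto|exact (hmax a' e)|exact (hmax' a e)].
    + exfalso; exact (hy1 b' e).
Qed.

Lemma partial_iso_gap : ~ is_min ltL a -> ~ is_max ltL a ->
  exists u v, ltM u v /\
    (forall a' b', In (a', b') P -> ltL a' a -> le_of ltM b' u) /\
    (forall a' b', In (a', b') P -> ltL a a' -> le_of ltM v b').
Proof.
  intros hnmin hnmax.
  destruct (list_greatest ltL (fun a' => ltL a' a) P linL)
    as [hlo|[[l bl] [hl1 [hl2 hl3]]]];
  destruct (list_greatest (fun x y => ltL y x) (fun a' => ltL a a') P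
              (strict_linear_order_flip _ linL))
    as [hhi|[[h bh] [hh1 [hh2 hh3]]]]; simpl in *.
  - destruct (coloursLM a) as [z _]. destruct (nontrivialM z) as [v [hv|hv]].
    + exists v, z. split; [exact hv|].
      split; intros a' b' hin hlt; exfalso;
        [exact (hlo (a', b') hin hlt)|exact (hhi (a', b') hin hlt)].
    + exists z, v. split; [exact hv|].
      split; intros a' b' hin hlt; exfalso;
        [exact (hlo (a', b') hin hlt)|exact (hhi (a', b') hin hlt)].
  - assert (hnm : ~ is_min ltM bh).
    { intros hm. apply (proj1 (proj2 (proj2 hP h bh hh1))) in hm. exact (hm a hh2). }
    destruct (not_min_lt ltM bh hnm) as [u hu].
    exists u, bh. split; [exact hu|split].
    + intros a' b' hin hlt; exfalso; exact (hlo (a', b') hin hlt).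
    + intros a' b' hin hlt. apply (partial_iso_le P h bh a' b'); auto.
      destruct (hh3 (a', b') hin hlt) as [e|e]; [left|right]; auto.
  - assert (hnm : ~ is_max ltM bl).
    { intros hm. apply (proj2 (proj2 (proj2 hP l bl hl1))) in hm. exact (hm a hl2). }
    destruct (not_max_lt ltM bl hnm) as [v hv].
    exists bl, v. split; [exact hv|split].
    + intros a' b' hin hlt. apply (partial_iso_le P a' b' l bl); auto.
      exact (hl3 (a', b') hin hlt).
    + intros a' b' hin hlt; exfalso; exact (hhi (a', b') hin hlt).
  - exists bl, bh. split; [apply (proj1 hP l bl h bh hl1 hh1), (proj1 (proj2 linL) _ _ _ hl2 hh2)|split].
    + intros a' b' hin hlt. apply (partial_iso_le P a' b' l bl); auto.
      exact (hl3 (a', b') hin hlt).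
    + intros a' b' hin hlt. apply (partial_iso_le P h bh a' b'); auto.
      destruct (hh3 (a', b') hin hlt) as [e|e]; [left|right]; auto.
Qed.

Lemma partial_iso_extend_inner : ~ is_min ltL a -> ~ is_max ltL a ->
  exists b, partial ((a, b) :: P).
Proof.
  intros hnmin hnmax. destruct (partial_iso_gap hnmin hnmax) as [u [v [huv [hlo hhi]]]].
  destruct (coloured_between u v a huv) as [b [hb1 [hb2 [hb3 [hb4 hb5]]]]].
  exists b. apply partial_iso_cons_new; auto; [split; intros; contradiction..|].
  intros a' b' hin. split; [eauto|split].
  - intros hlt. destruct (hhi a' b' hin hlt) as [e|e]; [eauto|subst; auto].
  - intros hlt. destruct (hlo a' b' hin hlt) as [e|e]; [eauto|subst; auto].
Qed.

End NewPoint.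

Lemma partial_iso_extend P a : partial P -> exists b, partial ((a, b) :: P).
Proof.
  intros hP. destruct (classic (exists b, In (a, b) P)) as [[b hb]|hnew].
  { exists b. apply partial_iso_cons_old; auto. }
  assert (fresh : forall a' b', In (a', b') P -> a' <> a)
    by (intros a' b' hin e; subst; apply hnew; eauto).
  destruct (classic (is_min ltL a)) as [hmin|hnmin]; [apply partial_iso_extend_min; auto|].
  destruct (classic (is_max ltL a)) as [hmax|hnmax]; [apply partial_iso_extend_max; auto|].
  apply partial_iso_extend_inner; auto.
Qed.

End BackAndForthStep.

Definition decode {X} (e : X -> nat) (n : nat) : option X :=
  match excluded_middle_informative (exists x, e x = n) with
  | left h => Some (proj1_sig (constructive_indefinite_description _ h))
  | right _ => None
  end.

Lemma decode_encode {X} (e : X -> nat) x :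
  (forall x y, e x = e y -> x = y) -> decode e (e x) = Some x.
Proof.
  intros he. unfold decode. destruct excluded_middle_informative as [h|h].
  - destruct constructive_indefinite_description as [y hy]; simpl. f_equal; auto.
  - exfalso; eauto.
Qed.

Section BackAndForth.
Context {L M : Type}.
Variables (ltL : L -> L -> Prop) (ltM : M -> M -> Prop) (cL : L -> nat) (cM : M -> nat)
  (eL : L -> nat) (eM : M -> nat).
Hypotheses (linL : strict_linear_order ltL) (linM : strict_linear_order ltM)
  (eL_inj : forall x y, eL x = eL y -> x = y) (eM_inj : forall x y, eM x = eM y -> x = y)
  (coloursL_dense : forall u v z, ltL u v -> exists w, cL w = cL z /\ ltL u w /\ ltL w v)
  (coloursM_dense : forall u v z, ltM u v -> exists w, cM w = cM z /\ ltM u w /\ ltM w v)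
  (coloursLM : forall x, exists y, cM y = cL x)
  (coloursML : forall y, exists x, cL x = cM y)
  (minLM : forall x, is_min ltL x -> exists y, is_min ltM y /\ cM y = cL x)
  (minML : forall y, is_min ltM y -> exists x, is_min ltL x /\ cL x = cM y)
  (maxLM : forall x, is_max ltL x -> exists y, is_max ltM y /\ cM y = cL x)
  (maxML : forall y, is_max ltM y -> exists x, is_max ltL x /\ cL x = cM y)
  (nontrivialL : forall x, exists u, ltL u x \/ ltL x u)
  (nontrivialM : forall y, exists u, ltM u y \/ ltM y u).

Local Notation partial := (partial_iso ltL ltM cL cM).

Let forth P a : exists b, partial P -> partial ((a, b) :: P).
Proof.
  destruct (classic (partial P)) as [h|h].
  - destruct (partial_iso_extend ltL ltM cL cM linL linM coloursM_dense coloursLM minLM maxLM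
                nontrivialL nontrivialM P a h) as [b hb].
    exists b; auto.
  - destruct (coloursLM a) as [b _]. exists b; intros; contradiction.
Qed.

Let back P b : exists a, partial P -> partial ((a, b) :: P).
Proof.
  destruct (classic (partial P)) as [h|h].
  - rewrite partial_iso_swap in h.
    destruct (partial_iso_extend ltM ltL cM cL linM linL coloursL_dense coloursML minML maxML
                nontrivialM nontrivialL (map swap P) b h) as [a ha].
    exists a; intros _. apply partial_iso_swap. exact ha.
  - destruct (coloursML b) as [a _]. exists a; intros; contradiction.
Qed.

Definition forth_image P a := proj1_sig (constructive_indefinite_description _ (forth P a)).
Definition back_image P b := proj1_sig (constructive_indefinite_description _ (back P b)).

Lemma forth_image_partial P a : partial P -> partial ((a, forth_image P a) :: P).
Proof. unfold forth_image; destruct constructive_indefinite_description; auto. Qed.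

Lemma back_image_partial P b : partial P -> partial ((back_image P b, b) :: P).
Proof. unfold back_image; destruct constructive_indefinite_description; auto. Qed.

Definition forth_step n P :=
  match decode eL n with Some a => (a, forth_image P a) :: P | None => P end.
Definition back_step n P :=
  match decode eM n with Some b => (back_image P b, b) :: P | None => P end.

Fixpoint approx n : list (L * M) :=
  match n with 0 => nil | S n => back_step n (forth_step n (approx n)) end.

Lemma approx_partial n : partial (approx n).
Proof.
  induction n as [|n IH]; simpl.
  - split; intros; contradiction.
  - unfold back_step, forth_step.
    destruct (decode eL n); destruct (decode eM n);
      auto using forth_image_partial, back_image_partial.
Qed.

Lemma approx_incl n m p : n <= m -> In p (approx n) -> In p (approx m).
Proof.
  induction 1 as [|m _ IH]; auto. intros h; simpl. unfold back_step, forth_step.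
  destruct (decode eL m); destruct (decode eM m); simpl; auto.
Qed.

Lemma approx_forth_cover a : exists b, In (a, b) (approx (S (eL a))).
Proof.
  simpl. unfold forth_step, back_step. rewrite decode_encode by exact eL_inj.
  eexists. destruct (decode eM (eL a)); simpl; eauto.
Qed.

Lemma approx_back_cover b : exists a, In (a, b) (approx (S (eM b))).
Proof.
  simpl. unfold back_step. rewrite decode_encode by exact eM_inj.
  eexists. left; reflexivity.
Qed.

Definition bf_map a := proj1_sig (constructive_indefinite_description _ (approx_forth_cover a)).
Definition bf_inv b := proj1_sig (constructive_indefinite_description _ (approx_back_cover b)).

Lemma bf_map_in a n : S (eL a) <= n -> In (a, bf_map a) (approx n).
Proof.
  intros h. apply (approx_incl _ _ _ h).
  unfold bf_map. destruct constructive_indefinite_description; auto.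
Qed.

Lemma bf_inv_in b n : S (eM b) <= n -> In (bf_inv b, b) (approx n).
Proof.
  intros h. apply (approx_incl _ _ _ h).
  unfold bf_inv. destruct constructive_indefinite_description; auto.
Qed.

Theorem back_and_forth : exists (f : L -> M) (g : M -> L),
  (forall x, g (f x) = x) /\ (forall y, f (g y) = y) /\
  (forall x x', ltL x x' <-> ltM (f x) (f x')) /\ (forall x, cM (f x) = cL x).
Proof.
  exists bf_map, bf_inv. split; [|split; [|split]].
  - intros x. set (N := S (eL x) + S (eM (bf_map x))).
    apply (partial_iso_eq ltL ltM cL cM linL linM (approx N) _ (bf_map x) _ (bf_map x)
             (approx_partial N)); [apply bf_inv_in|apply bf_map_in|]; unfold N; auto; lia.
  - intros y. set (N := S (eM y) + S (eL (bf_inv y))).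
    apply (partial_iso_eq ltL ltM cL cM linL linM (approx N) (bf_inv y) _ (bf_inv y) _
             (approx_partial N)); [apply bf_map_in|apply bf_inv_in|]; unfold N; auto; lia.
  - intros x x'. set (N := S (eL x) + S (eL x')).
    apply (proj1 (approx_partial N)); apply bf_map_in; unfold N; lia.
  - intros x. symmetry. apply (proj2 (approx_partial (S (eL x))) x (bf_map x)).
    apply bf_map_in; lia.
Qed.

End BackAndForth.

(** * The ordered set of points *)

Section Points.
Variables (alpha : option nat) (A : nat -> Type) (ltA : forall i, A i -> A i -> Prop)
  (SA : forall i j, A i -> A j -> Prop).
Hypotheses (Hlin : forall i, below alpha i -> strict_linear_order (ltA i))
  (Hsh : shuffles alpha A ltA SA).

Definition point : Type := {p : {i : nat & A i} | below alpha (projT1 p)}.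
Definition level (p : point) : nat := projT1 (proj1_sig p).
Definition mk_point i (x : A i) (hi : below alpha i) : point := exist _ (existT A i x) hi.
Definition point_set (p : point) : A 0 -> Prop :=
  canon_map A ltA SA (projT1 (proj1_sig p)) (projT2 (proj1_sig p)).
Definition point_lt (p q : point) : Prop := strict_subset (point_set p) (point_set q).

Lemma point_eq (p q : point) : proj1_sig p = proj1_sig q -> p = q.
Proof. destruct p, q; simpl; intros e. apply subset_eq_compat; auto. Qed.

Lemma mk_point_inj i (x y : A i) hi hi' : mk_point i x hi = mk_point i y hi' -> x = y.
Proof.
  intros e. apply (f_equal (@proj1_sig _ _)) in e; simpl in e.
  apply inj_pair2_eq_dec in e; auto using Nat.eq_dec.
Qed.

Lemma point_at_level (p : point) i (hi : below alpha i) :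
  level p = i -> exists x : A i, p = mk_point i x hi.
Proof.
  destruct p as [[j x] hj]; unfold level; simpl; intros <-.
  exists x. apply point_eq; reflexivity.
Qed.

Lemma point_not_gt_subset p q : ~ point_lt q p <-> subset (point_set p) (point_set q).
Proof.
  destruct p as [[i x] hi], q as [[j y] hj].
  apply (canon_map_not_gt_subset alpha A ltA SA Hlin Hsh); auto.
Qed.

Lemma point_gt_not_subset p q : point_lt q p <-> ~ subset (point_set p) (point_set q).
Proof. rewrite <- point_not_gt_subset. split; [tauto|apply NNPP]. Qed.

Lemma point_set_inj p q : point_set p = point_set q -> p = q.
Proof.
  destruct p as [[i x] hi], q as [[j y] hj]; unfold point_set; simpl. intros e.
  apply point_eq; simpl. apply (canon_map_injective alpha A ltA SA); auto.
Qed.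

Lemma point_lt_linear : strict_linear_order point_lt.
Proof.
  split; [|split].
  - intros p; apply strict_subset_irrefl.
  - intros p q r; apply strict_subset_trans.
  - intros [[i x] hi] [[j y] hj]. unfold point_lt, point_set; simpl.
    destruct (canon_map_trichotomy alpha A ltA SA Hlin Hsh i x j y hi hj) as [h|[h|h]]; auto.
    left. apply point_eq; auto.
Qed.

Lemma point_lt_level i (x x' : A i) hi :
  point_lt (mk_point i x hi) (mk_point i x' hi) <-> ltA i x x'.
Proof. symmetry; apply (canon_map_lt_level alpha A ltA SA Hlin Hsh); auto. Qed.

Lemma point_lt_shuffle i j (x : A i) (y : A j) hi hj : i < j ->
  point_lt (mk_point i x hi) (mk_point j y hj) <-> SA i j x y.
Proof. intros hij; symmetry; apply (canon_map_lt_shuffle alpha A ltA SA Hlin Hsh); auto. Qed.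

Lemma point_gt_shuffle i j (x : A i) (y : A j) hi hj : i < j ->
  point_lt (mk_point j y hj) (mk_point i x hi) <-> ~ SA i j x y.
Proof.
  intros hij; symmetry; apply (canon_map_gt_not_shuffle alpha A ltA SA Hlin Hsh); auto.
Qed.

Lemma point_countable (Hcnt : forall i, below alpha i -> countable (A i)) :
  exists e : point -> nat, forall p q, e p = e q -> p = q.
Proof.
  assert (hex : forall i, exists g : A i -> nat,
             below alpha i -> forall x y, g x = g y -> x = y).
  { intros i. destruct (classic (below alpha i)) as [h|h].
    - destruct (Hcnt i h) as [g hg]. exists g; auto.
    - exists (fun _ => 0). intros; contradiction. }
  set (g := fun i => proj1_sig (constructive_indefinite_description _ (hex i))).
  assert (hg : forall i, below alpha i -> forall x y, g i x = g i y -> x = y).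
  { intros i. unfold g. destruct constructive_indefinite_description; simpl; auto. }
  exists (fun p => to_nat (projT1 (proj1_sig p), g _ (projT2 (proj1_sig p)))).
  intros [[i x] hi] [[j y] hj] e; simpl in e.
  assert (e' : (i, g i x) = (j, g j y)).
  { rewrite <- (cancel_of_to (i, g i x)), <- (cancel_of_to (j, g j y)). f_equal. exact e. }
  injection e' as e1 e2. subst j. apply point_eq; simpl.
  f_equal. apply (hg i hi); auto.
Qed.

Section TwoLevels.
Hypothesis two_levels : below alpha 1.

Lemma point_lt_dense u v z : point_lt u v ->
  exists w, level w = level z /\ point_lt u w /\ point_lt w v.
Proof.
  destruct u as [[i x] hi], v as [[j y] hj], z as [[k c] hk]; unfold level; simpl.
  intros h. destruct (canon_map_dense alpha A ltA SA Hlin Hsh two_levels i j k x y hi hj hk h)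
    as [w [w1 w2]].
  exists (mk_point k w hk). simpl. auto.
Qed.

Lemma point_is_min i (x : A i) hi : is_min point_lt (mk_point i x hi) <-> is_min (ltA i) x.
Proof.
  split.
  - intros h x' hx. apply (h (mk_point i x' hi)), point_lt_level, hx.
  - intros h [[j y] hj] hyx.
    destruct (point_lt_dense _ _ (mk_point i x hi) hyx) as [[[k z] hk] [e [_ hz]]].
    unfold level in e; simpl in e; subst k. apply (h z). apply (point_lt_level i z x hk). exact hz.
Qed.

Lemma point_is_max i (x : A i) hi : is_max point_lt (mk_point i x hi) <-> is_max (ltA i) x.
Proof.
  split.
  - intros h x' hx. apply (h (mk_point i x' hi)), point_lt_level, hx.
  - intros h [[j y] hj] hxy.
    destruct (point_lt_dense _ _ (mk_point i x hi) hxy) as [[[k z] hk] [e [hz _]]].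
    unfold level in e; simpl in e; subst k. apply (h z). apply (point_lt_level i x z hk). exact hz.
Qed.

Lemma point_lt_nontrivial p : exists u, point_lt u p \/ point_lt p u.
Proof.
  destruct (proj1 Hsh 0 1 ltac:(lia) two_levels) as [[x0 [x1 _]] _].
  assert (h0 : below alpha 0) by (apply (below_le alpha 1); auto).
  destruct point_lt_linear as [_ [_ htri]].
  destruct (htri p (mk_point 0 x0 h0)) as [e|[e|e]]; [|eauto|eauto].
  destruct (htri p (mk_point 1 x1 two_levels)) as [e'|[e'|e']]; [|eauto|eauto].
  exfalso. subst p. apply (f_equal level) in e'. discriminate.
Qed.

End TwoLevels.

Definition limit_point (D : limit_structure alpha A ltA SA) : point :=
  let h := constructive_indefinite_description _ (proj2_sig D) in
  let h2 := constructive_indefinite_description _ (proj2 (proj2_sig h)) in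
  mk_point (proj1_sig h) (proj1_sig h2) (proj1 (proj2_sig h)).

Lemma limit_point_set D : point_set (limit_point D) = proj1_sig D.
Proof.
  unfold limit_point. destruct constructive_indefinite_description as [i [hi hl]]; simpl.
  destruct constructive_indefinite_description as [x hx]; simpl.
  unfold point_set; simpl. rewrite hx. reflexivity.
Qed.

Definition limit_elem (p : point) : limit_structure alpha A ltA SA :=
  exist _ (point_set p)
    (ex_intro _ (level p) (conj (proj2_sig p) (ex_intro _ (projT2 (proj1_sig p)) eq_refl))).

Lemma limit_elem_point D : limit_elem (limit_point D) = D.
Proof.
  destruct D as [D hD]. unfold limit_elem. apply subset_eq_compat. apply limit_point_set.
Qed.

Lemma limit_point_elem p : limit_point (limit_elem p) = p.
Proof. apply point_set_inj. rewrite limit_point_set. reflexivity. Qed.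

Lemma in_level_point_set i p : below alpha i ->
  in_level A ltA SA i (point_set p) <-> level p = i.
Proof.
  intros hi. split.
  - intros [x hx]. assert (e : p = mk_point i x hi) by (apply point_set_inj; exact hx).
    subst p; reflexivity.
  - destruct p as [[j y] hj]; unfold level; simpl; intros e; subst j.
    exists y; reflexivity.
Qed.

End Points.

Lemma order_iso_min {X Y} (ltX : X -> X -> Prop) (ltY : Y -> Y -> Prop) f x :
  order_iso ltX ltY f -> is_min ltX x -> is_min ltY (f x).
Proof.
  intros [[g [hg1 hg2]] hf] hm y' hy. rewrite <- (hg2 y') in hy. apply hf in hy. exact (hm _ hy).
Qed.

Lemma order_iso_max {X Y} (ltX : X -> X -> Prop) (ltY : Y -> Y -> Prop) f x :
  order_iso ltX ltY f -> is_max ltX x -> is_max ltY (f x).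
Proof.
  intros [[g [hg1 hg2]] hf] hm y' hy. rewrite <- (hg2 y') in hy. apply hf in hy. exact (hm _ hy).
Qed.

Lemma order_iso_sym {X Y} (ltX : X -> X -> Prop) (ltY : Y -> Y -> Prop) f :
  order_iso ltX ltY f -> exists g, order_iso ltY ltX g.
Proof.
  intros [[g [hg1 hg2]] hf]. exists g. split; [exists f; auto|].
  intros y y'. rewrite hf, !hg2. tauto.
Qed.

Section LevelIsos.
Variables (alpha : option nat)
  (A : nat -> Type) (ltA : forall i, A i -> A i -> Prop) (SA : forall i j, A i -> A j -> Prop)
  (B : nat -> Type) (ltB : forall i, B i -> B i -> Prop) (SB : forall i j, B i -> B j -> Prop).
Hypotheses (HlinA : forall i, below alpha i -> strict_linear_order (ltA i))
  (HlinB : forall i, below alpha i -> strict_linear_order (ltB i))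
  (HshA : shuffles alpha A ltA SA) (HshB : shuffles alpha B ltB SB)
  (two_levels : below alpha 1)
  (Hiso : forall i, below alpha i -> exists f : A i -> B i, order_iso (ltA i) (ltB i) f).

Lemma point_min_transfer (p : point alpha A) : is_min (point_lt alpha A ltA SA) p ->
  exists q, is_min (point_lt alpha B ltB SB) q /\ level alpha B q = level alpha A p.
Proof.
  destruct p as [[i a] hi]; intros hm. destruct (Hiso i hi) as [f hf].
  exists (mk_point alpha B i (f a) hi). split; [|reflexivity].
  apply point_is_min; auto. apply (order_iso_min _ _ f a hf).
  exact (proj1 (point_is_min alpha A ltA SA HlinA HshA two_levels i a hi) hm).
Qed.

Lemma point_max_transfer (p : point alpha A) : is_max (point_lt alpha A ltA SA) p ->
  exists q, is_max (point_lt alpha B ltB SB) q /\ level alpha B q = level alpha A p.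
Proof.
  destruct p as [[i a] hi]; intros hm. destruct (Hiso i hi) as [f hf].
  exists (mk_point alpha B i (f a) hi). split; [|reflexivity].
  apply point_is_max; auto. apply (order_iso_max _ _ f a hf).
  exact (proj1 (point_is_max alpha A ltA SA HlinA HshA two_levels i a hi) hm).
Qed.

End LevelIsos.

Section Equivalence.
Variables (alpha : option nat)
  (A : nat -> Type) (ltA : forall i, A i -> A i -> Prop) (SA : forall i j, A i -> A j -> Prop)
  (B : nat -> Type) (ltB : forall i, B i -> B i -> Prop) (SB : forall i j, B i -> B j -> Prop).
Hypotheses (HlinA : forall i, below alpha i -> strict_linear_order (ltA i))
  (HlinB : forall i, below alpha i -> strict_linear_order (ltB i))
  (HshA : shuffles alpha A ltA SA) (HshB : shuffles alpha B ltB SB).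

Local Notation ptA := (point alpha A).
Local Notation ptB := (point alpha B).
Local Notation ltPA := (point_lt alpha A ltA SA).
Local Notation ltPB := (point_lt alpha B ltB SB).

Definition points_isomorphic : Prop :=
  exists (Phi : ptA -> ptB) (Psi : ptB -> ptA),
    (forall p, Psi (Phi p) = p) /\ (forall q, Phi (Psi q) = q) /\
    (forall p p', ltPA p p' <-> ltPB (Phi p) (Phi p')) /\
    (forall p, level alpha B (Phi p) = level alpha A p).

Definition coherent_isos : Prop :=
  exists f : forall i, below alpha i -> A i -> B i,
    (forall i (hi : below alpha i), order_iso (ltA i) (ltB i) (f i hi)) /\
    (forall i j (hi : below alpha i) (hj : below alpha j), i < j ->
       forall (x : A i) (y : A j), SA i j x y <-> SB i j (f i hi x) (f j hj y)).

Lemma coherent_isos_of_points : points_isomorphic -> coherent_isos.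
Proof.
  intros [Phi [Psi [hPsiPhi [hPhiPsi [hlt hlevel]]]]].
  assert (hf : forall i hi (x : A i),
             exists y, Phi (mk_point alpha A i x hi) = mk_point alpha B i y hi)
    by (intros i hi x; apply point_at_level, hlevel).
  assert (hg : forall i hi (y : B i),
             exists x, Psi (mk_point alpha B i y hi) = mk_point alpha A i x hi).
  { intros i hi y. apply point_at_level.
    rewrite <- (hlevel (Psi _)), hPhiPsi. reflexivity. }
  set (f := fun i hi x => proj1_sig (constructive_indefinite_description _ (hf i hi x))).
  set (g := fun i hi y => proj1_sig (constructive_indefinite_description _ (hg i hi y))).
  assert (hfE : forall i hi x, Phi (mk_point alpha A i x hi) = mk_point alpha B i (f i hi x) hi).
  { intros i hi x. unfold f. destruct constructive_indefinite_description; auto. }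
  assert (hgE : forall i hi y, Psi (mk_point alpha B i y hi) = mk_point alpha A i (g i hi y) hi).
  { intros i hi y. unfold g. destruct constructive_indefinite_description; auto. }
  exists f. split.
  - intros i hi. split.
    + exists (g i hi). split.
      * intros x. apply (mk_point_inj alpha A i _ _ hi hi). rewrite <- hgE, <- hfE. apply hPsiPhi.
      * intros y. apply (mk_point_inj alpha B i _ _ hi hi). rewrite <- hfE, <- hgE. apply hPhiPsi.
    + intros x x'.
      rewrite <- (point_lt_level alpha A ltA SA HlinA HshA i x x' hi),
              <- (point_lt_level alpha B ltB SB HlinB HshB i _ _ hi), <- !hfE.
      apply hlt.
  - intros i j hi hj hij x y.
    rewrite <- (point_lt_shuffle alpha A ltA SA HlinA HshA i j x y hi hj hij),
            <- (point_lt_shuffle alpha B ltB SB HlinB HshB i j _ _ hi hj hij), <- !hfE.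
    apply hlt.
Qed.

Lemma points_of_coherent_isos : coherent_isos -> points_isomorphic.
Proof.
  intros [f [hiso hshuffle]].
  set (g := fun i hi => proj1_sig (constructive_indefinite_description _ (proj1 (hiso i hi)))).
  assert (hg : forall i hi, (forall x, g i hi (f i hi x) = x) /\ (forall y, f i hi (g i hi y) = y)).
  { intros i hi. unfold g. destruct constructive_indefinite_description; simpl; auto. }
  exists (fun p => mk_point alpha B (level alpha A p)
                    (f _ (proj2_sig p) (projT2 (proj1_sig p))) (proj2_sig p)).
  exists (fun q => mk_point alpha A (level alpha B q)
                    (g _ (proj2_sig q) (projT2 (proj1_sig q))) (proj2_sig q)).
  split; [|split; [|split]].
  - intros [[i x] hi]. apply point_eq; simpl. f_equal. apply hg.
  - intros [[i x] hi]. apply point_eq; simpl. f_equal. apply hg.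
  - intros [[i x] hi] [[j y] hj].
    change (ltPA (mk_point alpha A i x hi) (mk_point alpha A j y hj) <->
            ltPB (mk_point alpha B i (f i hi x) hi) (mk_point alpha B j (f j hj y) hj)).
    destruct (lt_eq_lt_dec i j) as [[e|e]|e].
    + rewrite !point_lt_shuffle by auto. apply hshuffle; auto.
    + subst j. rewrite (proof_irrelevance _ hj hi), !point_lt_level by auto.
      apply (proj2 (hiso i hi)).
    + rewrite !point_gt_shuffle by auto. rewrite (hshuffle j i hj hi e y x). tauto.
  - intros p; reflexivity.
Qed.

Lemma limits_isomorphic_of_points :
  points_isomorphic -> limits_isomorphic alpha A ltA SA B ltB SB.
Proof.
  intros [Phi [Psi [hPsiPhi [hPhiPsi [hlt hlevel]]]]].
  exists (fun D => limit_elem alpha B ltB SB (Phi (limit_point alpha A ltA SA D))).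
  exists (fun E => limit_elem alpha A ltA SA (Psi (limit_point alpha B ltB SB E))).
  split; [|split; [|split]].
  - intros D. rewrite (limit_point_elem alpha B ltB SB HlinB HshB), hPsiPhi.
    apply limit_elem_point.
  - intros E. rewrite (limit_point_elem alpha A ltA SA HlinA HshA), hPhiPsi.
    apply limit_elem_point.
  - intros D D'. simpl.
    rewrite <- (limit_point_set alpha A ltA SA D), <- (limit_point_set alpha A ltA SA D').
    rewrite <- (point_not_gt_subset alpha A ltA SA HlinA HshA),
            <- (point_not_gt_subset alpha B ltB SB HlinB HshB), hlt.
    tauto.
  - intros i hi D. simpl. rewrite <- (limit_point_set alpha A ltA SA D).
    rewrite (in_level_point_set alpha A ltA SA HlinA HshA i _ hi),
            (in_level_point_set alpha B ltB SB HlinB HshB i _ hi), hlevel.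
    tauto.
Qed.

Lemma points_of_limits_isomorphic :
  limits_isomorphic alpha A ltA SA B ltB SB -> points_isomorphic.
Proof.
  intros [F [G [hGF [hFG [hsub hlevel]]]]].
  exists (fun p => limit_point alpha B ltB SB (F (limit_elem alpha A ltA SA p))).
  exists (fun q => limit_point alpha A ltA SA (G (limit_elem alpha B ltB SB q))).
  split; [|split; [|split]].
  - intros p. rewrite limit_elem_point, hGF. apply (limit_point_elem alpha A ltA SA HlinA HshA).
  - intros q. rewrite limit_elem_point, hFG. apply (limit_point_elem alpha B ltB SB HlinB HshB).
  - intros p p'.
    rewrite (point_gt_not_subset alpha A ltA SA HlinA HshA p' p),
            (point_gt_not_subset alpha B ltB SB HlinB HshB), !limit_point_set.
    specialize (hsub (limit_elem alpha A ltA SA p') (limit_elem alpha A ltA SA p)).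
    simpl in hsub. tauto.
  - intros p.
    pose proof (hlevel (level alpha A p) (proj2_sig p) (limit_elem alpha A ltA SA p)) as hl.
    simpl in hl. rewrite <- (limit_point_set alpha B ltB SB) in hl.
    rewrite (in_level_point_set alpha A ltA SA HlinA HshA _ _ (proj2_sig p)),
            (in_level_point_set alpha B ltB SB HlinB HshB _ _ (proj2_sig p)) in hl.
    apply hl. reflexivity.
Qed.

Lemma points_of_level_isos (two_levels : below alpha 1)
    (HcntA : forall i, below alpha i -> countable (A i))
    (HcntB : forall i, below alpha i -> countable (B i))
    (Hiso : forall i, below alpha i -> exists f : A i -> B i, order_iso (ltA i) (ltB i) f) :
  points_isomorphic.
Proof.
  destruct (point_countable alpha A HcntA) as [eA heA].
  destruct (point_countable alpha B HcntB) as [eB heB].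
  assert (Hiso' : forall i, below alpha i -> exists g : B i -> A i, order_iso (ltB i) (ltA i) g)
    by (intros i hi; destruct (Hiso i hi) as [f hf]; eapply order_iso_sym; eauto).
  apply (back_and_forth ltPA ltPB (level alpha A) (level alpha B) eA eB
    (point_lt_linear alpha A ltA SA HlinA HshA) (point_lt_linear alpha B ltB SB HlinB HshB)
    heA heB (point_lt_dense alpha A ltA SA HlinA HshA two_levels)
    (point_lt_dense alpha B ltB SB HlinB HshB two_levels)).
  - intros [[i a] hi]. destruct (Hiso i hi) as [f _]. exists (mk_point alpha B i (f a) hi).
    reflexivity.
  - intros [[i a] hi]. destruct (Hiso' i hi) as [f _]. exists (mk_point alpha A i (f a) hi).
    reflexivity.
  - apply (point_min_transfer alpha A ltA SA B ltB SB HlinA HlinB HshA HshB two_levels Hiso).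
  - apply (point_min_transfer alpha B ltB SB A ltA SA HlinB HlinA HshB HshA two_levels Hiso').
  - apply (point_max_transfer alpha A ltA SA B ltB SB HlinA HlinB HshA HshB two_levels Hiso).
  - apply (point_max_transfer alpha B ltB SB A ltA SA HlinB HlinA HshB HshA two_levels Hiso').
  - apply (point_lt_nontrivial alpha A ltA SA HlinA HshA two_levels).
  - apply (point_lt_nontrivial alpha B ltB SB HlinB HshB two_levels).
Qed.

End Equivalence.

Theorem proposition2 (alpha : option nat)
    (A : nat -> Type) (ltA : forall i, A i -> A i -> Prop) (SA : forall i j, A i -> A j -> Prop)
    (B : nat -> Type) (ltB : forall i, B i -> B i -> Prop) (SB : forall i j, B i -> B j -> Prop)
    (HlinA : forall i, below alpha i -> strict_linear_order (ltA i))
    (HlinB : forall i, below alpha i -> strict_linear_order (ltB i))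
    (HcntA : forall i, below alpha i -> countable (A i))
    (HcntB : forall i, below alpha i -> countable (B i))
    (HshA : shuffles alpha A ltA SA)
    (HshB : shuffles alpha B ltB SB) :
  (limits_isomorphic alpha A ltA SA B ltB SB <->
   exists f : forall i, below alpha i -> A i -> B i,
     (forall i (hi : below alpha i), order_iso (ltA i) (ltB i) (f i hi)) /\
     (forall i j (hi : below alpha i) (hj : below alpha j), i < j ->
        forall (x : A i) (y : A j), SA i j x y <-> SB i j (f i hi x) (f j hj y))) /\
  ((exists f : forall i, below alpha i -> A i -> B i,
     (forall i (hi : below alpha i), order_iso (ltA i) (ltB i) (f i hi)) /\
     (forall i j (hi : below alpha i) (hj : below alpha j), i < j ->
        forall (x : A i) (y : A j), SA i j x y <-> SB i j (f i hi x) (f j hj y))) <->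
   (forall i, below alpha i -> exists f : A i -> B i, order_iso (ltA i) (ltB i) f)).
Proof.
  split; [split|split].
  - intros h. apply coherent_isos_of_points; auto.
    apply points_of_limits_isomorphic; auto.
  - intros h. apply limits_isomorphic_of_points; auto.
    apply points_of_coherent_isos; auto.
  - intros [f [hf _]] i hi. exists (f i hi); auto.
  - intros Hiso. destruct (classic (below alpha 1)) as [two_levels|one_level].
    + apply coherent_isos_of_points; auto. apply points_of_level_isos; auto.
    + exists (fun i hi => proj1_sig (constructive_indefinite_description _ (Hiso i hi))).
      split.
      * intros i hi. destruct constructive_indefinite_description; auto.
      * intros i j hi hj hij. exfalso. apply one_level, (below_le alpha j); auto; lia.
Qed.
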